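(* For any positive integer $n$, \[ \sum_{\sum_i i y_{k,i}=n}\binom{\sum_i y_{k,i}}{y_{k,1},\ldots,y_{k,n}}(-1)^{\sum_i y_{k,i}}\prod_{i=1}^{n}\left[\binom{n}{i}\right]^{y_{k,i}}=(-1)^n\binom{2n-1}{n-1}. \]
   Context: The sum runs over all partitions of $n$, each represented as a tuple $(y_{k,1},\ldots,y_{k,n})$ of non-negative integers with $\sum_{i=1}^n i\,y_{k,i}=n$; sums $\sum_i$ run over $i=1,\ldots,n$. $\binom{N}{a_1,\ldots,a_n}=\frac{N!}{a_1!\cdots a_n!}$ is the multinomial coefficient. *)

From mathcomp Require Import all_boot all_order all_algebra.
Set Implicit Arguments. Unset Strict Implicit. Unset Printing Implicit Defensive.
Import GRing.Theory Num.Theory.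

Definition multinom (n : nat) (a : 'I_n -> nat) : nat :=
  (\sum_(i < n) a i)`! %/ \prod_(i < n) (a i)`!.

(* A partition of n encoded by its multiplicities: y i is the multiplicity of
   the part (i+1), for i : 'I_n.  Since each multiplicity is at most n, we
   range over y : {ffun 'I_n -> 'I_n.+1}. *)
Definition is_partition (n : nat) (y : {ffun 'I_n -> 'I_n.+1}) : bool :=
  \sum_(i < n) i.+1 * y i == n.

From mathcomp Require Import all_boot all_order all_algebra.
From mathcomp Require Import zify.
Import GRing.Theory.
Set Implicit Arguments. Unset Strict Implicit.

(* Summing [multinom y * \prod_i b_i ^+ y_i] over the partitions y of m gives
   the coefficient c_m of x^m in 1 / (1 - \sum_i b_i x^i).  For b_i = -C(n, i)
   this series is (1 + x)^-n, whose coefficients are (-1)^m C(n + m - 1, m).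
   Rather than working with power series we compare recurrences: Pascal's rule
   for multinomials (remove one part) gives c_m = \sum_(1 <= i <= m) b_i c_(m-i),
   and (1 + x)^n (1 + x)^-n = 1 says that (-1)^m C(n + m - 1, m) satisfies the
   same recurrence. *)

Lemma prod_fact_dvdn n (a : 'I_n -> nat) :
  \prod_(i < n) (a i)`! %| (\sum_(i < n) a i)`!.
Proof.
elim: n a => [|n IHn] a; first by rewrite !big_ord0.
rewrite !big_ord_recr /=; set s := (\sum_(i < n) _)%N.
have := bin_fact (leq_addl s (a ord_max)); rewrite addnK => <-.
by rewrite mulnC [X in _ %| X]mulnCA dvdn_mul // dvdn_mull.
Qed.

Lemma multinom_fact n (a : 'I_n -> nat) :
  multinom a * \prod_(i < n) (a i)`! = (\sum_(i < n) a i)`!.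
Proof. by rewrite divnK // prod_fact_dvdn. Qed.

Lemma eq_multinom n (a a' : 'I_n -> nat) : a =1 a' -> multinom a = multinom a'.
Proof.
move=> eq_a; rewrite /multinom (eq_bigr _ (fun i _ => eq_a i)).
by rewrite (eq_bigr _ (fun i _ => congr1 factorial (eq_a i))).
Qed.

Section Decrement.
Variables (n : nat) (i : 'I_n).

Definition decr (a : 'I_n -> nat) (j : 'I_n) : nat := a j - (j == i).

Variables (a : 'I_n -> nat) (a_i_gt0 : 0 < a i).

Lemma big_decr (R : Type) (idx : R) (op : Monoid.com_law idx)
    (F : 'I_n -> nat -> R) :
  \big[op/idx]_(j < n) F j (decr a j) =
  op (F i (a i).-1) (\big[op/idx]_(j < n | j != i) F j (a j)).
Proof.
rewrite (bigD1 i) //= /decr eqxx subn1; congr (op _ _).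
by apply: eq_bigr => j /negbTE ->; rewrite subn0.
Qed.

Lemma sum_decr : \sum_(j < n) decr a j = (\sum_(j < n) a j).-1.
Proof.
by rewrite (big_decr _ (fun _ x => x)) [in RHS](bigD1 i) //=; case: (a i) a_i_gt0.
Qed.

Lemma prod_fact_decr :
  \prod_(j < n) (a j)`! = a i * \prod_(j < n) (decr a j)`!.
Proof.
rewrite (big_decr _ (fun _ x => x`!)) [in LHS](bigD1 i) //= mulnA.
by case: (a i) a_i_gt0.
Qed.

End Decrement.

Lemma multinom_rec n (a : 'I_n -> nat) : 0 < \sum_(i < n) a i ->
  multinom a = \sum_(i < n | 0 < a i) multinom (decr i a).
Proof.
move=> sum_gt0.
have prod_gt0 : 0 < \prod_(j < n) (a j)`!.
  by rewrite prodn_gt0 // => j; rewrite fact_gt0.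
apply/eqP; rewrite -(eqn_pmul2r prod_gt0); apply/eqP.
rewrite multinom_fact big_distrl /=.
rewrite [RHS](eq_bigr (fun i => a i * (\sum_(j < n) a j).-1`!)) => [|i a_i_gt0].
  rewrite -big_distrl /= [X in _ = X * _]big_rmcond => [|i].
    by case: (\sum_(i < n) a i) sum_gt0.
  by rewrite -eqn0Ngt => /eqP.
by rewrite (prod_fact_decr a_i_gt0) mulnCA multinom_fact sum_decr.
Qed.

Local Open Scope ring_scope.

Section NegativeBinomial.
Variable R : pzRingType.

(* The coefficient of x^m in (1 + x)^-k. *)
Definition negbin (k m : nat) : R := (-1) ^+ m * 'C((k + m).-1, m)%:R.

Lemma negbin0 k : negbin k 0 = 1.
Proof. by rewrite /negbin expr0 mul1r bin0. Qed.

Lemma negbinS k m : negbin k m.+1 = negbin k.+1 m.+1 + negbin k.+1 m.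
Proof.
rewrite /negbin !addSn addnS /= binS natrD mulrDr exprS mulN1r !mulNr.
by rewrite addrNK.
Qed.

Lemma sum_bin_negbin k m :
  \sum_(j < m.+1) 'C(k, j)%:R * negbin k (m - j) = (m == 0)%:R.
Proof.
elim: k m => [|k IHk] m.
  rewrite big_ord_recl big1 => [|j _]; last by rewrite bin0n mul0r.
  rewrite addr0 mul1r subn0 /negbin add0n.
  by case: m => [|m]; rewrite ?bin0 ?mulr1 // bin_small // mulr0.
rewrite -(IHk m); case: m => [|m]; first by rewrite !big_ord1 !bin0 !negbin0.
have -> : \sum_(j < m.+2) 'C(k.+1, j)%:R * negbin k.+1 (m.+1 - j) =
    \sum_(j < m.+2) 'C(k, j)%:R * negbin k.+1 (m.+1 - j)
    + \sum_(j < m.+1) 'C(k, j)%:R * negbin k.+1 (m - j) :> R.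
  rewrite big_ord_recl [in RHS]big_ord_recl !bin0 subn0 -addrA; congr (_ + _).
  rewrite -big_split; apply: eq_bigr => j _.
  by rewrite lift0 binS natrD mulrDl subSS.
rewrite big_ord_recr [RHS]big_ord_recr /= subnn !negbin0 addrAC; congr (_ + _).
rewrite -big_split; apply: eq_bigr => j _ /=.
rewrite subSn; last by rewrite -ltnS.
by rewrite (negbinS k) mulrDr.
Qed.

Lemma negbin_rec k m : (0 < m)%N ->
  negbin k m = - \sum_(i < m) 'C(k, i.+1)%:R * negbin k (m - i.+1).
Proof.
case: m => // m _; apply/eqP; rewrite -addr_eq0.
by have := sum_bin_negbin k m.+1; rewrite big_ord_recl bin0 mul1r subn0 => ->.
Qed.

End NegativeBinomial.

Section PartitionSum.
Variables (R : comPzRingType) (n : nat) (b : nat -> R).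
Implicit Types (y : {ffun 'I_n -> 'I_n.+1}) (i : 'I_n).

Definition weight y : nat := (\sum_(i < n) i.+1 * y i)%N.

(* [b i] is the factor contributed by a part of size [i.+1]. *)
Definition partition_term y : R :=
  (multinom (fun i => nat_of_ord (y i)))%:R * \prod_(i < n) b i ^+ y i.

Definition partition_sum (m : nat) : R :=
  \sum_(y : {ffun 'I_n -> 'I_n.+1} | weight y == m) partition_term y.

Definition dec i y : {ffun 'I_n -> 'I_n.+1} :=
  [ffun j => inord (decr i (fun j => nat_of_ord (y j)) j)].

(* [inord] wraps around when [y i = n], whence the bound in [dec_inc]. *)
Definition inc i y : {ffun 'I_n -> 'I_n.+1} :=
  [ffun j => inord (y j + (j == i))].

Lemma dec_val i y j : dec i y j = decr i (fun j => nat_of_ord (y j)) j :> nat.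
Proof. by rewrite ffunE inordK // ltnS (leq_trans (leq_subr _ _)) // -ltnS. Qed.

Lemma leq_mul_weight i y : (i.+1 * y i <= weight y)%N.
Proof. by rewrite /weight (bigD1 i) //= leq_addr. Qed.

Lemma weight_dec i y : (0 < y i)%N -> weight (dec i y) = (weight y - i.+1)%N.
Proof.
move=> y_i_gt0; rewrite /weight.
rewrite (eq_bigr _ (fun (j : 'I_n) _ => congr1 (muln j.+1) (dec_val i y j))).
rewrite (big_decr _ _ _ (fun j x => j.+1 * x)%N) [in RHS](bigD1 i) //=.
by case: (nat_of_ord (y i)) y_i_gt0 => // k _; rewrite mulnS -addnA addKn.
Qed.

Lemma weight_eq0 y : (weight y == 0)%N = (\sum_(i < n) y i == 0)%N.
Proof.
by rewrite /weight !sum_nat_eq0; apply: eq_forallb => j; rewrite muln_eq0.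
Qed.

Lemma index_lt_weight i y : (0 < y i)%N -> (i < weight y)%N.
Proof.
by move=> y_i_gt0; rewrite (leq_trans _ (leq_mul_weight i y)) // leq_pmulr.
Qed.

Lemma partition_term_rec y : (0 < weight y)%N ->
  partition_term y = \sum_(i < n | (0 < y i)%N) b i * partition_term (dec i y).
Proof.
rewrite lt0n weight_eq0 -lt0n => sum_gt0.
rewrite /partition_term multinom_rec // natr_sum big_distrl /=.
apply: eq_bigr => i y_i_gt0; rewrite mulrCA; congr (_%:R * _).
  by apply: eq_multinom => j; rewrite dec_val.
rewrite (eq_bigr _ (fun (j : 'I_n) _ => congr1 (GRing.exp (b j)) (dec_val i y j))).
rewrite (big_decr _ _ _ (fun j x => b j ^+ x)) [in LHS](bigD1 i) //= mulrA -exprS.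
by case: (nat_of_ord (y i)) y_i_gt0.
Qed.

Lemma inc_dec i y : (0 < y i)%N -> inc i (dec i y) = y.
Proof.
move=> y_i_gt0; apply/ffunP => j; apply: ord_inj; rewrite ffunE dec_val /decr /=.
by case: eqP => [->|_]; rewrite /= ?subn0 ?addn0 ?subnK // inordK.
Qed.

Lemma dec_inc i y : (y i < n)%N -> dec i (inc i y) = y.
Proof.
move=> y_i_lt; apply/ffunP => j; apply: ord_inj; rewrite dec_val /decr ffunE /=.
case: eqP => [->|_]; last by rewrite addn0 subn0 inordK.
by rewrite inordK ?addnK // addn1.
Qed.

Lemma inc_dec_eq0 i y : y i = 0 :> nat -> inc i (dec i y) != y.
Proof.
move=> y_i0; apply/eqP => /ffunP/(_ i)/(congr1 (@nat_of_ord _)).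
rewrite ffunE dec_val /decr eqxx y_i0 inordK //.
exact: leq_ltn_trans (leq0n i) (ltn_ord i).
Qed.

Lemma sum_partition_term_dec i m : (i < m <= n)%N ->
  \sum_(y | (weight y == m) && (0 < y i)%N) partition_term (dec i y) =
  partition_sum (m - i.+1).
Proof.
case/andP=> lt_im le_mn.
rewrite /partition_sum [RHS](reindex_onto (dec i) (inc i)) => [|z /eqP weight_z].
  apply: eq_bigl => y; case: (posnP (y i)) => [y_i0 | y_i_gt0].
    by rewrite (negbTE (inc_dec_eq0 y_i0)) !andbF.
  by rewrite inc_dec // eqxx weight_dec // eqn_sub2rE ?index_lt_weight ?andbT.
apply: dec_inc; have le_z_mul : (z i <= i.+1 * z i)%N by rewrite leq_pmull.
by have := leq_mul_weight i z; rewrite weight_z; lia.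
Qed.

Lemma partition_sum0 : partition_sum 0 = 1.
Proof.
rewrite /partition_sum (eq_bigl (pred1 [ffun=> ord0])) => [|y]; last first.
  rewrite weight_eq0 sum_nat_eq0 /=; apply/forallP/eqP => [y0 | ->].
    by apply/ffunP => i; rewrite ffunE; apply: ord_inj; apply/eqP; apply: y0.
  by move=> i; rewrite ffunE.
rewrite big_pred1_eq /partition_term /multinom !big1 ?mulr1 // => i _.
all: by rewrite ffunE ?expr0.
Qed.

Lemma partition_sum_dec m : (0 < m)%N ->
  partition_sum m = \sum_(i < n)
    b i * \sum_(y | (weight y == m) && (0 < y i)%N) partition_term (dec i y).
Proof.
move=> m_gt0; rewrite /partition_sum (eq_bigr (fun y =>
  \sum_(i < n | (0 < y i)%N) b i * partition_term (dec i y))) => [|y /eqP weight_y].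
  under eq_bigr do rewrite big_mkcond; rewrite exchange_big /=.
  by apply: eq_bigr => i _; rewrite big_distrr -big_mkcondr.
by apply: partition_term_rec; rewrite weight_y.
Qed.

Lemma partition_sum_rec m : (0 < m <= n)%N ->
  partition_sum m = \sum_(i < m) b i * partition_sum (m - i.+1).
Proof.
case/andP=> m_gt0 le_mn; rewrite partition_sum_dec //.
rewrite (big_ord_widen n (fun k => b k * partition_sum (m - k.+1))) //.
rewrite [RHS]big_mkcond; apply: eq_bigr => i _ /=; case: ltnP => [lt_im | le_mi].
  by rewrite sum_partition_term_dec // lt_im.
rewrite big_pred0 ?mulr0 // => y; apply/negbTE/andP => -[/eqP weight_y].
by move/index_lt_weight; rewrite weight_y ltnNge le_mi.
Qed.

End PartitionSum.

Lemma partition_sum_negbin (R : comPzRingType) n m : (m <= n)%N ->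
  partition_sum n (fun i => - 'C(n, i.+1)%:R : R) m = negbin R n m.
Proof.
elim/ltn_ind: m => m IHm le_mn.
have [->|m_gt0] := posnP m; first by rewrite partition_sum0 negbin0.
rewrite partition_sum_rec ?m_gt0 // (negbin_rec _ _ m_gt0) -sumrN.
apply: eq_bigr => i _; rewrite mulNr IHm // ?ltn_subrL ?m_gt0 //.
exact: leq_trans (leq_subr _ _) le_mn.
Qed.

Unset Implicit Arguments.

Theorem corollary4p1 (n : nat) (hn : (0 < n)%N) :
  \sum_(y : {ffun 'I_n -> 'I_n.+1} | is_partition y)
     ((multinom (fun i => nat_of_ord (y i)))%:R
      * (-1) ^+ (\sum_(i < n) nat_of_ord (y i))%N
      * \prod_(i < n) ('C(n, i.+1))%:R ^+ nat_of_ord (y i) : int)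
  = (-1) ^+ n * ('C(2 * n - 1, n - 1))%:R.
Proof.
have -> : 'C(2 * n - 1, n - 1) = 'C((n + n).-1, n).
  by rewrite -bin_sub; [congr binomial | ]; lia.
rewrite -[RHS]/(negbin int n n) -(partition_sum_negbin _ (leqnn n)).
apply: eq_bigr => y _.
rewrite /partition_term -mulrA expr_sum -big_split /=; congr (_ * _).
by apply: eq_bigr => i _; rewrite -exprMn mulN1r.
Qed.
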